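(* Let $A$ be a ring of Krull dimension $d$ and let $s\in A$ be a non-zero divisor such that $\dim(A_s)\le d-1$. Then there exists a generalized dimension function $\delta:\operatorname{Spec}(A)\to\mathbb N$ such that $\delta(\mathfrak p)\le d-1$ for all $\mathfrak p\in\operatorname{Spec}(A)$ and $\delta(\mathfrak p)=\dim(A/\mathfrak p)$ for every prime $\mathfrak p$ containing $s$.
   Context: Rings are commutative Noetherian with $1\ne0$ of finite Krull dimension. For $\mathcal S\subset\operatorname{Spec}(A)$ and a function $\delta:\mathcal S\to\mathbb N$, define a partial order on $\mathcal S$ by $\mathfrak p\ll\mathfrak q$ iff $\mathfrak p\subset\mathfrak q$ and $\delta(\mathfrak p)>\delta(\mathfrak q)$. $\delta$ is called a generalized dimension function if for every ideal $I\subset A$ the set $V(I)\cap\mathcal S$ has only finitely many minimal elements with respect to $\ll$. *)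

From Stdlib Require List.
From HB Require Import structures.
From mathcomp Require Import all_boot all_order all_algebra.
Set Implicit Arguments. Unset Strict Implicit. Unset Printing Implicit Defensive.
Import GRing.Theory.
Local Open Scope ring_scope.

Section CommAlg.
Variable R : comNzRingType.

Definition subI (I J : R -> Prop) : Prop := forall x, I x -> J x.

Definition is_ideal (I : R -> Prop) : Prop :=
  I 0 /\ (forall x y, I x -> I y -> I (x + y)) /\ (forall r x, I x -> I (r * x)).

Definition prime_ideal (P : R -> Prop) : Prop :=
  is_ideal P /\ ~ P 1 /\ (forall a b, P (a * b) -> P a \/ P b).

Definition noetherian : Prop :=
  forall I : nat -> R -> Prop, (forall n, is_ideal (I n)) ->
    (forall n, subI (I n) (I n.+1)) ->
    exists N, forall n, (N <= n)%N -> subI (I n) (I N).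

Definition prime_chain (c : nat -> R -> Prop) (n : nat) : Prop :=
  (forall i, (i <= n)%N -> prime_ideal (c i)) /\
  (forall i, (i < n)%N -> subI (c i) (c i.+1) /\ ~ subI (c i.+1) (c i)).

Definition krull_dim (d : nat) : Prop :=
  (exists c, prime_chain c d) /\ (forall c n, prime_chain c n -> (n <= d)%N).

(* dim(R/p) = n : primes of R/p = primes of R containing p *)
Definition quot_dim (p : R -> Prop) (n : nat) : Prop :=
  (exists c, prime_chain c n /\ subI p (c 0)) /\
  (forall c m, prime_chain c m -> subI p (c 0) -> (m <= n)%N).

(* dim(R_s) <= d - 1 (with dim of the zero ring = -oo):
   primes of R_s = primes of R not containing s *)
Definition loc_dim_lt (s : R) (d : nat) : Prop :=
  forall c m, prime_chain c m -> (forall i, (i <= m)%N -> ~ c i s) -> (m < d)%N.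

Definition nonzerodivisor (s : R) : Prop := forall x, s * x = 0 -> x = 0.

Definition dd_lt (delta : (R -> Prop) -> nat) (p q : R -> Prop) : Prop :=
  subI p q /\ (delta q < delta p)%N.

Definition dd_minimal (delta : (R -> Prop) -> nat) (I p : R -> Prop) : Prop :=
  prime_ideal p /\ subI I p /\
  ~ (exists q, prime_ideal q /\ subI I q /\ dd_lt delta q p).

Definition gen_dim_fun (delta : (R -> Prop) -> nat) : Prop :=
  forall I, is_ideal I -> exists l : seq (R -> Prop),
    forall p, dd_minimal delta I p ->
      exists q, List.In q l /\ (forall x, p x <-> q x).
End CommAlg.

From mathcomp Require Import all_boot all_order all_algebra.
From mathcomp Require Import ring.
From Stdlib Require Import Classical ClassicalEpsilon.
Set Implicit Arguments. Unset Strict Implicit. Unset Printing Implicit Defensive.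
Import GRing.Theory.
Local Open Scope ring_scope.

(* For a prime p put delta(p) = dim(R/p) when s is in p, and otherwise the
   length of the longest chain of primes starting at p and avoiding s, i.e.
   dim((R/p)_s).  Both are bounded by d, so they are computed as a bounded
   maximum.
   - Every ideal I of a Noetherian ring contains a finite product of primes
     containing I (Noetherian induction).  A prime p minimal over I, resp.
     over I + (s), contains one of these factors q; if q were strictly
     smaller than p, prepending q to a maximal chain for p shows
     delta(q) > delta(p), contradicting the <<-minimality of p.  Hence the
     <<-minimal elements of V(I) lie among finitely many primes.
   - A prime containing the nonzerodivisor s is not a minimal prime (again
     via a product of primes equal to 0), so dim(R/p) < d when s is in p;
     when s is not in p, delta(p) < d is the hypothesis dim(R_s) < d.
   - delta(p) = dim(R/p) for p containing s holds by construction. *)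

Fixpoint bounded_max (P : nat -> Prop) (n : nat) : nat :=
  match n with
  | 0 => 0
  | n'.+1 => if excluded_middle_informative (P n'.+1) then n'.+1
             else bounded_max P n'
  end.

Lemma bounded_maxP (P : nat -> Prop) n : P 0 -> P (bounded_max P n).
Proof.
elim: n => [|n IH] //= P0.
by destruct excluded_middle_informative; last apply: IH.
Qed.

Lemma bounded_max_ge (P : nat -> Prop) n m : (m <= n)%N -> P m -> (m <= bounded_max P n)%N.
Proof.
elim: n => [|n IH] /=; first by rewrite leqn0 => /eqP ->.
move=> le_mn Pm; destruct excluded_middle_informative => //.
by move: le_mn; rewrite leq_eqVlt => /orP [/eqP eq_m|/IH]; [subst m|apply].
Qed.

Lemma bounded_max_lt (P Q : nat -> Prop) n :
  P 0 -> (forall m, P m -> Q m.+1) -> (forall m, Q m -> (m <= n)%N) ->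
  (bounded_max P n < bounded_max Q n)%N.
Proof.
move=> P0 PQ Qbound; have Q_succ := PQ _ (bounded_maxP n P0).
exact: bounded_max_ge (Qbound _ Q_succ) Q_succ.
Qed.

Section NoetherianPrimes.
Variable R : comNzRingType.
Implicit Types (I J p q : R -> Prop) (l : seq (R -> Prop)) (s : R).

Inductive prod_of : seq (R -> Prop) -> R -> Prop :=
| prod_of_nil : prod_of [::] 1
| prod_of_cons p l a y : p a -> prod_of l y -> prod_of (p :: l) (a * y).

Lemma prod_of_cat l1 l2 y : prod_of (l1 ++ l2) y ->
  exists y1 y2, y = y1 * y2 /\ prod_of l1 y1 /\ prod_of l2 y2.
Proof.
elim: l1 y => [|p l1 IH] y /= Hy.
  by exists 1, y; rewrite mul1r; split; [|split => //; constructor].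
inversion Hy as [|p' l' a y' pa Hy']; subst.
have [y1 [y2 [-> [Y1 Y2]]]] := IH _ Hy'.
by exists (a * y1), y2; rewrite mulrA; split; [|split => //; constructor].
Qed.

Definition prime_cover I l :=
  (forall q, List.In q l -> prime_ideal q /\ subI I q) /\
  (forall y, prod_of l y -> I y).

Definition covered I := exists l, prime_cover I l.

Definition add_principal I (a : R) : R -> Prop :=
  fun x => exists i r, I i /\ x = i + r * a.

Lemma add_principal_ideal I a : is_ideal I -> is_ideal (add_principal I a).
Proof.
move=> [I0 [ID IM]]; split; [|split].
- by exists 0, 0; split => //; ring.
- move=> x y [i1 [r1 [H1 ->]]] [i2 [r2 [H2 ->]]].
  by exists (i1 + i2), (r1 + r2); split; [exact: ID|ring].
- move=> r x [i1 [r1 [H1 ->]]].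
  by exists (r * i1), (r * r1); split; [exact: IM|ring].
Qed.

Lemma add_principal_sub I a : subI I (add_principal I a).
Proof. by move=> x Ix; exists x, 0; split => //; ring. Qed.

Lemma add_principal_gen I a : is_ideal I -> add_principal I a a.
Proof. by move=> [I0 _]; exists 0, 1; split => //; ring. Qed.

Lemma add_principal_le I J a :
  is_ideal J -> subI I J -> J a -> subI (add_principal I a) J.
Proof. by move=> [_ [JD JM]] IJ Ja x [i [r [Ii ->]]]; apply: JD; auto. Qed.

Lemma add_principal_mul I a b x y : is_ideal I -> I (a * b) ->
  add_principal I a x -> add_principal I b y -> I (x * y).
Proof.
move=> [_ [ID IM]] Iab [i1 [r1 [Ii1 ->]]] [i2 [r2 [Ii2 ->]]].
have -> : (i1 + r1 * a) * (i2 + r2 * b)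
        = (i2 + r2 * b) * i1 + (r1 * a) * i2 + (r1 * r2) * (a * b) by ring.
by apply: (ID); [apply: (ID)|]; apply: IM.
Qed.

(* A non-covered ideal is strictly contained in another non-covered ideal:
   it is proper and not prime, and if I + (a), I + (b) were covered for
   ab in I then their covers would combine into a cover of I. *)
Lemma not_covered_step I : is_ideal I -> ~ covered I ->
  exists J, is_ideal J /\ ~ covered J /\ subI I J /\ ~ subI J I.
Proof.
move=> HI ncovI.
have I1 : ~ I 1.
  by move=> I1; apply: ncovI; exists [::]; split => // y Hy; inversion Hy.
have [a [b [Iab [Ia Ib]]]] : exists a b, I (a * b) /\ ~ I a /\ ~ I b.
  apply: NNPP => nab; apply: ncovI; exists [:: I]; split.
    by move=> q [<-|[]]; split => //; split => //; split => // a b Iab;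
      apply: NNPP => /not_or_and [Ia Ib]; apply: nab; exists a, b.
  move=> y Hy; inversion Hy as [|p l a y' Ia Hy']; subst.
  by inversion Hy'; rewrite mulr1.
have enlarge c : ~ I c -> ~ covered (add_principal I c) ->
    exists J, is_ideal J /\ ~ covered J /\ subI I J /\ ~ subI J I.
  move=> Ic nc; exists (add_principal I c); split; first exact: add_principal_ideal.
  split=> //; split; first exact: add_principal_sub.
  by move=> sub; apply/Ic/sub/add_principal_gen.
case: (classic (covered (add_principal I a))) => [[l1 [L1 P1]]|]; last exact: enlarge.
case: (classic (covered (add_principal I b))) => [[l2 [L2 P2]]|]; last exact: enlarge.
exfalso; apply: ncovI; exists (l1 ++ l2); split.
  move=> q /(List.in_app_or _ _ _) [/L1|/L2] [Pq Sq];
    by split => // x Ix; apply/Sq/add_principal_sub.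
move=> y /prod_of_cat [y1 [y2 [-> [Y1 Y2]]]].
exact: add_principal_mul HI Iab (P1 _ Y1) (P2 _ Y2).
Qed.

(* Noetherian induction: a property of ideals whose failures can always be
   strictly enlarged to failures holds for every ideal, since otherwise the
   enlargements would form a strictly ascending chain. *)
Lemma noetherian_ind (P : (R -> Prop) -> Prop) : noetherian R ->
  (forall I, is_ideal I -> ~ P I ->
     exists J, is_ideal J /\ ~ P J /\ subI I J /\ ~ subI J I) ->
  forall I, is_ideal I -> P I.
Proof.
move=> noeth grow I0 HI0; apply: NNPP => nP0.
pose bad I := is_ideal I /\ ~ P I.
have next I : exists J, bad I -> bad J /\ subI I J /\ ~ subI J I.
  case: (classic (bad I)) => [[HI nPI]|nbad]; last by exists I.
  by have [J [HJ [nPJ HIJ]]] := grow I HI nPI; exists J.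
pose f I := proj1_sig (constructive_indefinite_description _ (next I)).
have fP I : bad I -> bad (f I) /\ subI I (f I) /\ ~ subI (f I) I.
  exact: proj2_sig (constructive_indefinite_description _ (next I)).
pose c n := iter n f I0.
have c_bad n : bad (c n) by elim: n => [|n IH] //; rewrite /c iterS; case: (fP _ IH).
have [N stable] := noeth c (fun n => proj1 (c_bad n))
                         (fun n => proj1 (proj2 (fP _ (c_bad n)))).
by apply: (proj2 (proj2 (fP _ (c_bad N)))); have := stable N.+1 (leqnSn N).
Qed.

Lemma noetherian_covered : noetherian R -> forall I, is_ideal I -> covered I.
Proof. by move=> noeth; apply: noetherian_ind => // I; apply: not_covered_step. Qed.

Lemma prod_of_avoiding p s l : prime_ideal p ->
  (forall q, List.In q l -> q s \/ ~ subI q p) ->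
  exists k t, prod_of l (s ^+ k * t) /\ ~ p t.
Proof.
move=> [_ [p1 pmul]]; elim: l => [|q l IH] Hl.
  by exists 0%N, 1; rewrite mulr1; split => //; constructor.
have [k [t [Hprod pt]]] := IH (fun q' h => Hl q' (or_intror h)).
case: (Hl q (or_introl erefl)) => [qs|nsub].
  by exists k.+1, t; rewrite exprS -mulrA; split => //; constructor.
have [a Ha] := not_all_ex_not _ (fun a => q a -> p a) nsub.
have [qa pa] := imply_to_and _ _ Ha.
exists k, (a * t); rewrite mulrCA; split; first by constructor.
by case/pmul.
Qed.

Lemma prime_contains_factor p l : prime_ideal p ->
  (forall y, prod_of l y -> p y) -> exists q, List.In q l /\ subI q p.
Proof.
move=> Pp pprod; apply: NNPP => nfac.
have [|k [t]] := @prod_of_avoiding p 1 l Pp.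
  by move=> q inq; right => sub; apply: nfac; exists q.
by rewrite expr1n mul1r => -[/pprod].
Qed.

Lemma nonzerodivisor_expr s k t : nonzerodivisor s -> s ^+ k * t = 0 -> t = 0.
Proof. by move=> nzd; elim: k => [|k IH]; rewrite ?expr0 ?mul1r // exprS -mulrA => /nzd. Qed.

(* In a Noetherian ring a prime containing a nonzerodivisor s is not
   minimal: otherwise every factor of a prime product equal to 0 would
   either contain s or leave c, producing s^k t = 0 with t outside c. *)
Lemma prime_below_nonzerodivisor s c : noetherian R -> nonzerodivisor s ->
  prime_ideal c -> c s -> exists q, prime_ideal q /\ subI q c /\ ~ subI c q.
Proof.
move=> noeth nzd Pc cs; apply: NNPP => nbelow.
have zero_ideal : is_ideal (fun x : R => x = 0).
  split; [done|split]; first by move=> x y -> ->; rewrite addr0.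
  by move=> r x ->; rewrite mulr0.
have [l [L Pl]] := noetherian_covered noeth zero_ideal.
have [|k [t [Hprod ct]]] := @prod_of_avoiding c s l Pc.
  move=> q /L [Pq _]; case: (classic (subI q c)) => [qc|]; last by right.
  left; apply: NNPP => qs; apply: nbelow; exists q; split => //; split => //.
  by move=> cq; apply/qs/cq.
by apply: ct; rewrite (nonzerodivisor_expr nzd (Pl _ Hprod)); case: Pc => -[].
Qed.

Lemma minimal_in_cover (delta : (R -> Prop) -> nat) I J l p :
  prime_cover J l -> subI I J -> subI J p -> dd_minimal delta I p ->
  (forall q, prime_ideal q -> subI J q -> subI q p -> ~ subI p q ->
     (delta p < delta q)%N) ->
  exists q, List.In q l /\ (forall x, p x <-> q x).
Proof.
move=> [L Pl] IJ Jp [Pp [_ nlower]] lower.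
have [q [inq qp]] := prime_contains_factor Pp (fun y Hy => Jp _ (Pl _ Hy)).
exists q; split => //; have [Pq Jq] := L q inq.
case: (classic (subI p q)) => [pq x|npq]; first by split; [apply: pq|apply: qp].
exfalso; apply: nlower; exists q; split => //; split; last by split; last exact: lower.
by move=> x /IJ /Jq.
Qed.

Definition chain_above p m := exists c, prime_chain c m /\ subI p (c 0%N).

(* Chains of primes of length m starting at p and avoiding s, i.e. chains
   in Spec((R/p)_s). *)
Definition chain_avoiding s p m :=
  exists c, prime_chain c m /\ (forall i, (i <= m)%N -> ~ c i s) /\ c 0%N = p.

Definition prepend (c : nat -> R -> Prop) q : nat -> R -> Prop :=
  fun i => if i is j.+1 then c j else q.

Lemma prepend_chain c m q : prime_chain c m -> prime_ideal q ->
  subI q (c 0%N) -> ~ subI (c 0%N) q -> prime_chain (prepend c q) m.+1.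
Proof. by move=> [P S] Pq qc cq; split; case=> [|i] //= Hi; [apply: P|apply: S]. Qed.

Lemma constant_chain p : prime_ideal p -> prime_chain (fun _ => p) 0.
Proof. by move=> Pp; split => // i; rewrite leqn0 => /eqP ->. Qed.

Lemma chain_above_refl p : prime_ideal p -> chain_above p 0.
Proof. by move=> Pp; exists (fun _ => p); split; [exact: constant_chain|]. Qed.

Lemma chain_avoiding_refl s p : prime_ideal p -> ~ p s -> chain_avoiding s p 0.
Proof.
move=> Pp ps; exists (fun _ => p); split; first exact: constant_chain.
by split.
Qed.

Lemma chain_above_extend p q m : prime_ideal q -> subI q p -> ~ subI p q ->
  chain_above p m -> chain_above q m.+1.
Proof.
move=> Pq qp pq [c [Hc pc]]; exists (prepend c q); split => //.
by apply: prepend_chain => // [x /qp /pc|cq]; last by apply: pq => x /pc /cq.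
Qed.

Lemma chain_avoiding_extend s p q m : prime_ideal q -> ~ q s -> subI q p ->
  ~ subI p q -> chain_avoiding s p m -> chain_avoiding s q m.+1.
Proof.
move=> Pq qs qp pq [c [Hc [av c0]]]; subst p; exists (prepend c q).
by split; [exact: prepend_chain|split => //; case=> [|i] //= /av].
Qed.

Section DimensionFunction.
Variables (d : nat) (s : R).
Hypothesis chain_bound : forall (c : nat -> R -> Prop) n, prime_chain c n -> (n <= d)%N.

Lemma chain_above_bound p m : chain_above p m -> (m <= d)%N.
Proof. by move=> [c [/chain_bound]]. Qed.

Lemma chain_avoiding_bound p m : chain_avoiding s p m -> (m <= d)%N.
Proof. by move=> [c [/chain_bound]]. Qed.

Definition dim_delta p : nat :=
  if excluded_middle_informative (p s) then bounded_max (chain_above p) d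
  else bounded_max (chain_avoiding s p) d.

Lemma dim_delta_in p : p s -> dim_delta p = bounded_max (chain_above p) d.
Proof. by rewrite /dim_delta; destruct excluded_middle_informative. Qed.

Lemma dim_delta_out p : ~ p s -> dim_delta p = bounded_max (chain_avoiding s p) d.
Proof. by rewrite /dim_delta; destruct excluded_middle_informative. Qed.

(* If q is strictly contained in p and both lie on the same side of V(s),
   then delta(q) > delta(p): a maximal chain for p extends by q. *)
Lemma dim_delta_strict p q : prime_ideal p -> prime_ideal q ->
  subI q p -> ~ subI p q -> (q s <-> p s) -> (dim_delta p < dim_delta q)%N.
Proof.
move=> Pp Pq qp pq qs_ps; case: (classic (p s)) => ps.
  have qs : q s by apply/qs_ps.
  rewrite dim_delta_in // dim_delta_in //.
  apply: bounded_max_lt (chain_above_refl Pp) _ (@chain_above_bound q) => m.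
  exact: chain_above_extend.
have qs : ~ q s by move=> /qs_ps.
rewrite dim_delta_out // dim_delta_out //.
apply: bounded_max_lt (chain_avoiding_refl Pp ps) _ (@chain_avoiding_bound q) => m.
exact: chain_avoiding_extend.
Qed.

(* The <<-minimal primes over I lie among the factors of prime covers of I
   (for those avoiding s) and of I + (s) (for those containing s). *)
Lemma dim_delta_gen : noetherian R -> gen_dim_fun dim_delta.
Proof.
move=> noeth I HI.
have [l1 cov1] := noetherian_covered noeth HI.
have [l2 cov2] := noetherian_covered noeth (add_principal_ideal s HI).
exists (l1 ++ l2) => p minp; have [Pp [Ip _]] := minp.
case: (classic (p s)) => ps.
  have Jp : subI (add_principal I s) p by apply: add_principal_le => //; case: Pp.
  have [|q [inq eq]] := minimal_in_cover cov2 (@add_principal_sub I s) Jp minp.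
    move=> q Pq Jq qp pq; apply: dim_delta_strict => //.
    by split => // _; apply/Jq/add_principal_gen.
  by exists q; split => //; apply: List.in_or_app; right.
have [|q [inq eq]] := minimal_in_cover cov1 (fun x (Ix : I x) => Ix) Ip minp.
  by move=> q Pq Iq qp pq; apply: dim_delta_strict => //; split => // /qp.
by exists q; split => //; apply: List.in_or_app; left.
Qed.

(* delta is bounded by d - 1: above V(s) a maximal chain can be extended
   below its (non-minimal) bottom prime; off V(s) this is dim(R_s) < d. *)
Lemma dim_delta_lt : noetherian R -> nonzerodivisor s -> loc_dim_lt s d ->
  forall p, prime_ideal p -> (dim_delta p < d)%N.
Proof.
move=> noeth nzd loc p Pp; case: (classic (p s)) => ps.
  rewrite dim_delta_in //.
  have [c [Hc pc]] := bounded_maxP d (chain_above_refl Pp).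
  have [q [Pq [qc cq]]] := prime_below_nonzerodivisor noeth nzd (proj1 Hc 0%N isT) (pc _ ps).
  exact: chain_bound (prepend_chain Hc Pq qc cq).
rewrite dim_delta_out //.
by have [c [Hc [av _]]] := bounded_maxP d (chain_avoiding_refl Pp ps); apply: loc Hc av.
Qed.

Lemma dim_delta_quot p : prime_ideal p -> p s -> quot_dim p (dim_delta p).
Proof.
move=> Pp ps; rewrite dim_delta_in //; split.
  exact: bounded_maxP (chain_above_refl Pp).
by move=> c m Hc pc; apply: bounded_max_ge (chain_bound Hc) _; exists c.
Qed.
End DimensionFunction.
End NoetherianPrimes.

Theorem mainTheorem3 (R : comNzRingType) (d : nat) (s : R) :
  noetherian R -> krull_dim R d -> nonzerodivisor s -> loc_dim_lt s d ->
  exists delta : (R -> Prop) -> nat,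
    gen_dim_fun delta /\
    (forall p, prime_ideal p -> (delta p < d)%N) /\
    (forall p, prime_ideal p -> p s -> quot_dim p (delta p)).
Proof.
move=> noeth [_ chain_bound] nzd loc.
exists (dim_delta d s); split; first exact: dim_delta_gen.
split; first exact: dim_delta_lt.
exact: dim_delta_quot.
Qed.
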